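(* Consider the climate-coalition game with linear-quadratic utility and populations $P_1>P_2>\dots>P_N>0$ (all distinct), $N\ge 3$. Restrict attention to pure-strategy Nash equilibria of the participation stage in which the coalition is nonempty. Then in any such equilibrium the coalition has at most two members, and country 1 (the most populous) is always a member. More precisely: (i) if $2P_2<P_1$, the unique equilibrium coalition is $\{1\}$; (ii) if $2P_2=P_1$, the equilibrium coalitions are exactly $\{1\}$ and $\{1,2\}$; (iii) if $2P_2>P_1$, every equilibrium coalition has exactly two members and is of the form $\{1,j\}$ with $j\in\{2,3,\dots,l\}$, where $l$ is the largest index such that $P_l\ge\max\{P_1/2,\;2P_2-P_1\}$; conversely each such $\{1,j\}$ is an equilibrium coalition.
   Context: Climate-coalition game: $N$ countries with populations $P_i>0$. The per-capita utility in country $i$ is $u_i=\beta A-\frac{\gamma}{2}a_i^2$ with $\beta,\gamma>0$, where $a_i\in\mathbb{R}$ is country $i$'s per-capita abatement and $A=\sum_j P_ja_j$. Stage 1: each country simultaneously and non-cooperatively decides whether to join a coalition $S$ (a strategy is ''join'' or ''stay out''). Stage 2: the members of $S$ jointly choose their per-capita abatements to maximize the coalition's total welfare $W_S=\sum_{i\in S}P_iu_i$ (no transfers), while each outsider chooses its per-capita abatement to maximize its own $u_i$. A participation profile is a Nash equilibrium if no country can strictly increase its per-capita utility (evaluated at the resulting stage-2 outcome) by unilaterally switching its participation decision. (A one-member coalition and an empty coalition induce the same abatements, which is why only nonempty coalitions are considered.) *)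

From mathcomp Require Import all_boot all_order all_algebra.
Set Implicit Arguments. Unset Strict Implicit. Unset Printing Implicit Defensive.
Import Order.TTheory GRing.Theory Num.Theory.
Local Open Scope ring_scope.

Section Game.
Variables (R : realFieldType) (N : nat) (P : 'I_N -> R) (beta gamma : R).

Definition aggA (a : 'I_N -> R) : R := \sum_(j < N) P j * a j.

Definition util (i : 'I_N) (a : 'I_N -> R) : R :=
  beta * aggA a - gamma / 2 * a i ^+ 2.

Definition welfare (S : {set 'I_N}) (a : 'I_N -> R) : R :=
  \sum_(i in S) P i * util i a.

Definition upd (a : 'I_N -> R) (i : 'I_N) (x : R) : 'I_N -> R :=
  fun j => if j == i then x else a j.

Definition stage2 (S : {set 'I_N}) (a : 'I_N -> R) : Prop :=
  (forall b : 'I_N -> R, (forall j, j \notin S -> b j = a j) ->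
     welfare S b <= welfare S a) /\
  (forall i, i \notin S -> forall x : R, util i (upd a i x) <= util i a).

Definition toggle (S : {set 'I_N}) (i : 'I_N) : {set 'I_N} :=
  if i \in S then S :\ i else i |: S.

Definition is_NE (S : {set 'I_N}) : Prop :=
  forall (i : 'I_N) (a a' : 'I_N -> R),
    stage2 S a -> stage2 (toggle S i) a' -> ~ (util i a < util i a').

End Game.

From mathcomp Require Import all_boot all_order all_algebra.
From mathcomp Require Import ring lra zify.
Import Order.TTheory GRing.Theory Num.Theory.
Local Open Scope ring_scope.
Set Implicit Arguments. Unset Strict Implicit.

(* In stage 2 the members' joint problem and each outsider's problem are
   strictly concave, so the outcome is unique: members abate beta P_S / gamma
   and an outsider i abates beta P_i / gamma, where P_S is the coalition's
   population.  Substituting, a member i gains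
   (beta^2 / 2 gamma) (P_S - P_i) (P_S - 3 P_i) by leaving and an outsider i
   gains (beta^2 / 2 gamma) P_S (2 P_i - P_S) by joining.  Hence S is an
   equilibrium iff P_S <= 3 P_i for all members and 2 P_i <= P_S for all
   outsiders.  The least populous member rules out three members, country 1
   must belong to S since otherwise 2 P_1 <= P_S < 2 P_1, and it remains to
   test {1} and {1, j} against these two inequalities. *)

Lemma sumr_setC (R : nmodType) (T : finType) (S : {set T}) (F : T -> R) :
  \sum_j F j = \sum_(j in S) F j + \sum_(j in ~: S) F j.
Proof.
by rewrite (bigID (mem S)) /=; congr (_ + _); apply: eq_bigl => j; rewrite ?inE.
Qed.

Section StageTwo.
Variables (R : realFieldType) (N : nat) (P : 'I_N -> R) (beta gamma : R).

Definition mass (S : {set 'I_N}) : R := \sum_(j in S) P j.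

Definition outside_mass2 (S : {set 'I_N}) : R := \sum_(j in ~: S) P j ^+ 2.

(* Members equate their marginal cost gamma a_i with the coalition's marginal
   benefit beta * mass S, outsiders with their own benefit beta * P_i. *)
Definition abatement (S : {set 'I_N}) (j : 'I_N) : R :=
  if j \in S then beta * mass S / gamma else beta * P j / gamma.

Definition stable (S : {set 'I_N}) : Prop :=
  (forall i, i \in S -> mass S <= 3 * P i) /\
  (forall i, i \notin S -> 2 * P i <= mass S).

Lemma mass_set1 (i : 'I_N) : mass [set i] = P i.
Proof. by rewrite /mass big_set1. Qed.

Lemma mass_set2 (i j : 'I_N) : i != j -> mass [set i; j] = P i + P j.
Proof. by move=> neq_ij; rewrite /mass big_setU1 ?big_set1 // inE. Qed.

Lemma mass_setD1 (S : {set 'I_N}) (i : 'I_N) : i \in S -> mass S = P i + mass (S :\ i).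
Proof. by move=> iS; rewrite /mass (big_setD1 _ iS). Qed.

Lemma outside_mass2_setD1 (S : {set 'I_N}) (i : 'I_N) :
  i \in S -> outside_mass2 (S :\ i) = P i ^+ 2 + outside_mass2 S.
Proof.
move=> iS; rewrite /outside_mass2.
have -> : ~: (S :\ i) = i |: ~: S by apply/setP => j; rewrite !inE negb_and negbK.
by rewrite big_setU1 // inE negbK.
Qed.

Lemma aggA_upd (a : 'I_N -> R) (i : 'I_N) (x : R) :
  aggA P (upd a i x) = aggA P a + P i * (x - a i).
Proof.
rewrite /aggA (bigD1 i) //= [in RHS](bigD1 i) //= /upd eqxx.
under eq_bigr => j /negbTE -> do [].
ring.
Qed.

Lemma util_eq (i : 'I_N) (a b : 'I_N -> R) :
  a =1 b -> util P beta gamma i a = util P beta gamma i b.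
Proof. by move=> eq_ab; rewrite /util /aggA eq_ab; under eq_bigr do rewrite eq_ab. Qed.

Lemma welfareE (S : {set 'I_N}) (a : 'I_N -> R) :
  welfare P beta gamma S a =
  beta * aggA P a * mass S - gamma / 2 * \sum_(i in S) P i * a i ^+ 2.
Proof.
rewrite /welfare /mass mulr_sumr mulr_sumr -sumrB.
by apply: eq_bigr => i _; rewrite /util; ring.
Qed.

Lemma aggA_eq_outside (S : {set 'I_N}) (a b : 'I_N -> R) :
  (forall j, j \notin S -> b j = a j) ->
  aggA P b = aggA P a + \sum_(j in S) P j * (b j - a j).
Proof.
move=> eq_out; rewrite /aggA.
rewrite [\sum_j P j * b j](sumr_setC S) [\sum_j P j * a j](sumr_setC S).
rewrite [\sum_(j in ~: S) P j * b j](eq_bigr (fun j => P j * a j)); last first.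
  by move=> j; rewrite inE => /eq_out ->.
rewrite [\sum_(j in S) P j * b j](eq_bigr (fun j => P j * a j + P j * (b j - a j))).
  by rewrite big_split /=; ring.
by move=> j _; ring.
Qed.

Hypotheses (gamma_gt0 : 0 < gamma) (P_gt0 : forall i, 0 < P i).

Lemma util_upd (a : 'I_N -> R) (i : 'I_N) (x : R) :
  util P beta gamma i (upd a i x) = util P beta gamma i a +
    gamma / 2 * ((a i - beta * P i / gamma) ^+ 2 - (x - beta * P i / gamma) ^+ 2).
Proof. by rewrite /util aggA_upd /upd eqxx; field; rewrite gt_eqF. Qed.

Lemma le_mass (S : {set 'I_N}) (i : 'I_N) : i \in S -> P i <= mass S.
Proof.
by move=> iS; rewrite (mass_setD1 iS) lerDl; apply: sumr_ge0 => j _; apply: ltW.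
Qed.

Lemma mass_gt0 (S : {set 'I_N}) : S != set0 -> 0 < mass S.
Proof. by case/set0Pn => i iS; apply: lt_le_trans (le_mass iS). Qed.

Lemma aggA_abatement (S : {set 'I_N}) :
  aggA P (abatement S) = beta / gamma * (mass S ^+ 2 + outside_mass2 S).
Proof.
rewrite /aggA (sumr_setC S) mulrDr; congr (_ + _).
  rewrite expr2 {1}/mass mulr_suml mulr_sumr; apply: eq_bigr => j jS.
  by rewrite /abatement jS; field; rewrite gt_eqF.
rewrite /outside_mass2 mulr_sumr; apply: eq_bigr => j.
by rewrite inE /abatement => /negbTE ->; field; rewrite gt_eqF.
Qed.

Lemma welfare_abatement_sub (S : {set 'I_N}) (b : 'I_N -> R) :
  (forall j, j \notin S -> b j = abatement S j) ->
  welfare P beta gamma S (abatement S) - welfare P beta gamma S b =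
  \sum_(i in S) gamma / 2 * P i * (b i - abatement S i) ^+ 2.
Proof.
move=> eq_out; rewrite !welfareE (aggA_eq_outside eq_out).
rewrite [LHS](_ : _ = gamma / 2 * \sum_(i in S) P i * b i ^+ 2
   - gamma / 2 * \sum_(i in S) P i * abatement S i ^+ 2
   - beta * mass S * \sum_(i in S) P i * (b i - abatement S i)); last by ring.
rewrite ![gamma / 2 * _]mulr_sumr [beta * mass S * _]mulr_sumr -!sumrB.
by apply: eq_bigr => i iS; rewrite /abatement iS; field; rewrite gt_eqF.
Qed.

Lemma weighted_sqr_ge0 (i : 'I_N) (x : R) : 0 <= gamma / 2 * P i * x ^+ 2.
Proof. by rewrite mulr_ge0 ?sqr_ge0 // mulr_ge0 ?divr_ge0 ?ltW. Qed.

Lemma stage2_abatement (S : {set 'I_N}) : stage2 P beta gamma S (abatement S).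
Proof.
split=> [b eq_out | i iS x].
  rewrite -subr_ge0 (welfare_abatement_sub eq_out).
  by apply: sumr_ge0 => i _; apply: weighted_sqr_ge0.
rewrite util_upd /abatement (negbTE iS) subrr expr0n /= sub0r.
by rewrite gerDl mulrN oppr_le0 mulr_ge0 ?sqr_ge0 ?divr_ge0 ?ltW.
Qed.

Lemma stage2_abatement_uniq (S : {set 'I_N}) (a : 'I_N -> R) :
  stage2 P beta gamma S a -> a =1 abatement S.
Proof.
move=> [welfare_max best_resp].
have out_eq j : j \notin S -> a j = abatement S j.
  move=> jS; have := best_resp j jS (beta * P j / gamma).
  rewrite util_upd subrr expr0n /= subr0 gerDl pmulr_rle0 ?divr_gt0 // => sq_le0.
  rewrite /abatement (negbTE jS); apply/eqP.
  by rewrite -subr_eq0 -sqrf_eq0 eq_le sq_le0 sqr_ge0.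
have sub_le0 := welfare_max _ (fun j jS => esym (out_eq j jS)).
rewrite -subr_le0 (welfare_abatement_sub out_eq) in sub_le0.
have sum0 : \sum_(i in S) gamma / 2 * P i * (a i - abatement S i) ^+ 2 = 0.
  by apply/eqP; rewrite eq_le sub_le0 sumr_ge0 // => i _; apply: weighted_sqr_ge0.
move=> j; have [jS|/out_eq //] := boolP (j \in S).
have /eqP := psumr_eq0P (fun i _ => weighted_sqr_ge0 i _) sum0 jS.
have weight_gt0 : 0 < gamma / 2 * P j by rewrite mulr_gt0 ?divr_gt0.
by rewrite mulf_eq0 gt_eqF //= sqrf_eq0 subr_eq0 => /eqP.
Qed.

Lemma util_leave (S : {set 'I_N}) (i : 'I_N) : i \in S ->
  util P beta gamma i (abatement S) - util P beta gamma i (abatement (S :\ i)) =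
  - (beta ^+ 2 / (2 * gamma)) * (mass S - P i) * (mass S - 3 * P i).
Proof.
move=> iS; rewrite /util !aggA_abatement (outside_mass2_setD1 iS).
by rewrite /abatement iS !inE eqxx /= (mass_setD1 iS); field; rewrite gt_eqF.
Qed.

Lemma util_join (S : {set 'I_N}) (i : 'I_N) : i \notin S ->
  util P beta gamma i (abatement S) - util P beta gamma i (abatement (i |: S)) =
  beta ^+ 2 / (2 * gamma) * mass S * (mass S - 2 * P i).
Proof.
move=> iS; have := util_leave (setU11 i S).
by rewrite (mass_setD1 (setU11 i S)) setU1K // => leave; rewrite -[LHS]opprB leave; ring.
Qed.

Hypothesis beta_neq0 : beta != 0.

Lemma toggle_no_gain (S : {set 'I_N}) (i : 'I_N) : S != set0 ->
  (util P beta gamma i (abatement (toggle S i)) <= util P beta gamma i (abatement S)) =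
  (if i \in S then mass S <= 3 * P i else 2 * P i <= mass S).
Proof.
move=> S_neq0.
have beta2_gt0 : 0 < beta ^+ 2 by rewrite lt_def sqrf_eq0 beta_neq0 sqr_ge0.
have c_gt0 : 0 < beta ^+ 2 / (2 * gamma) by rewrite divr_gt0 // mulr_gt0.
rewrite /toggle -subr_ge0; case: ifP => iS.
  rewrite util_leave // -mulrA mulNr oppr_ge0 pmulr_rle0 //.
  have := le_mass iS; rewrite le_eqVlt => /orP [/eqP <- | lt_mass].
    by rewrite subrr mul0r lexx ler_peMl ?ler1n ?ltW.
  by rewrite pmulr_rle0 ?subr_gt0 // subr_le0.
by rewrite util_join ?iS // -mulrA pmulr_rge0 // pmulr_rge0 ?mass_gt0 // subr_ge0.
Qed.

Lemma is_NE_abatement (S : {set 'I_N}) : is_NE P beta gamma S <->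
  forall i, util P beta gamma i (abatement (toggle S i)) <= util P beta gamma i (abatement S).
Proof.
split=> [NE i | no_gain i a a' stS stT].
  by rewrite leNgt; apply/negP; apply: NE; apply: stage2_abatement.
rewrite (util_eq _ (stage2_abatement_uniq stS)) (util_eq _ (stage2_abatement_uniq stT)).
by apply/negP; rewrite -leNgt.
Qed.

Lemma is_NE_stable (S : {set 'I_N}) : S != set0 -> is_NE P beta gamma S <-> stable S.
Proof.
move=> S_neq0; rewrite is_NE_abatement; split=> [no_gain | [internal external] i].
  by split=> i Hi; have := no_gain i; rewrite toggle_no_gain // ?Hi ?(negbTE Hi).
rewrite toggle_no_gain //.
by case: ifP => Hi; [exact: internal | apply: external; rewrite Hi].
Qed.

End StageTwo.

Lemma set_card_le2 (T : finType) (S : {set T}) : S != set0 -> (#|S| <= 2)%N ->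
  (exists x, S = [set x]) \/ (exists x y, x != y /\ S = [set x; y]).
Proof.
rewrite -cards_eq0 leq_eqVlt ltnS leq_eqVlt ltnS leqn0 => /negbTE ->.
by rewrite orbF => /orP [/cards2P | /cards1P]; [right | left].
Qed.

Section Ranking.
Variables (R : realFieldType) (N : nat) (P : 'I_N -> R) (i1 i2 : 'I_N).
Hypotheses (P_gt0 : forall i, 0 < P i)
  (P_decr : forall i j : 'I_N, (i < j)%N -> P j < P i)
  (i1_0 : val i1 = 0%N) (i2_1 : val i2 = 1%N).

Lemma P_leq (i j : 'I_N) : (i <= j)%N -> P j <= P i.
Proof. by rewrite leq_eqVlt => /orP [/eqP/val_inj -> // | /P_decr/ltW]. Qed.

Lemma neq_first (j : 'I_N) : (j != i1) = (0 < j)%N.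
Proof. by rewrite lt0n -i1_0 -val_eqE. Qed.

Lemma neq_first_second (j : 'I_N) : j != i1 -> j != i2 -> (1 < j)%N.
Proof. by rewrite -!val_eqE i1_0 i2_1 /=; lia. Qed.

Lemma second_neq_first : i2 != i1.
Proof. by rewrite neq_first i2_1. Qed.

Lemma P_lt_first (j : 'I_N) : j != i1 -> P j < P i1.
Proof. by move=> j_neq; apply: P_decr; rewrite i1_0 -neq_first. Qed.

Lemma P_le_second (j : 'I_N) : j != i1 -> P j <= P i2.
Proof. by move=> j_neq; apply: P_leq; rewrite i2_1 -neq_first. Qed.

Lemma P_lt_second (j : 'I_N) : j != i1 -> j != i2 -> P j < P i2.
Proof. by move=> j_neq1 j_neq2; apply: P_decr; rewrite i2_1 neq_first_second. Qed.

Lemma stable_card_le2 (S : {set 'I_N}) : stable P S -> (#|S| <= 2)%N.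
Proof.
move=> [internal _]; rewrite leqNgt; apply/negP => S_gt2.
have [k0 k0S] : exists k, k \in S by apply/card_gt0P; apply: ltn_trans S_gt2.
case: (arg_maxnP val k0S) => k kS k_max; have {}kS : k \in S := kS.
have lt_k j : j \in S :\ k -> P k < P j.
  rewrite !inE -val_eqE => /andP [j_neq jS]; apply: P_decr.
  by rewrite ltn_neqAle j_neq; apply: k_max.
rewrite (cardsD1 k) kS add1n ltnS in S_gt2.
have [j jS'] : exists j, j \in S :\ k by apply/card_gt0P; apply: ltnW.
rewrite (cardsD1 j) jS' add1n ltnS in S_gt2.
have [j' j'S''] := card_gt0P S_gt2.
have j'S' : j' \in S :\ k by move: j'S''; rewrite inE => /andP [].
have := internal k kS; rewrite (mass_setD1 P kS) (mass_setD1 P jS').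
have := le_mass P_gt0 j'S''; have := lt_k _ jS'; have := lt_k _ j'S'; lra.
Qed.

Lemma stable_first_in (S : {set 'I_N}) : S != set0 -> stable P S -> i1 \in S.
Proof.
move=> S_neq0 stS; have [_ external] := stS; apply: contraT => i1S.
have := external _ i1S; case: (set_card_le2 S_neq0 (stable_card_le2 stS)).
  case=> x eqS; move: i1S; rewrite eqS mass_set1 inE eq_sym => /P_lt_first.
  by have := P_gt0 i1; lra.
case=> x [y [xy eqS]]; move: i1S; rewrite eqS mass_set2 // !inE negb_or.
by rewrite !(eq_sym i1) => /andP [/P_lt_first + /P_lt_first]; lra.
Qed.

Lemma stable_shape (S : {set 'I_N}) : S != set0 -> stable P S ->
  S = [set i1] \/ exists2 j, j != i1 & S = [set i1; j].
Proof.
move=> S_neq0 stS; have := stable_first_in S_neq0 stS.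
case: (set_card_le2 S_neq0 (stable_card_le2 stS)) => [[x ->]|[x [y [xy ->]]]].
  by rewrite inE => /eqP ->; left.
rewrite !inE => /orP [] /eqP ?; subst; right.
  by exists y; rewrite 1?eq_sym.
by exists x; rewrite 1?setUC.
Qed.

Lemma stable_set1 : stable P [set i1] <-> 2 * P i2 <= P i1.
Proof.
rewrite /stable mass_set1; split=> [[_ /(_ i2)] | le_12].
  by rewrite inE second_neq_first; apply.
split=> i; rewrite inE; first by move=> /eqP ->; have := P_gt0 i1; lra.
by move=> /P_le_second; lra.
Qed.

Definition pair_threshold : R := Num.max (P i1 / 2) (2 * P i2 - P i1).

Lemma stable_pair (j : 'I_N) : j != i1 ->
  stable P [set i1; j] <-> pair_threshold <= P j.
Proof.
move=> j_neq; rewrite /stable /pair_threshold ge_max mass_set2 1?eq_sym //.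
split=> [[internal external] | /andP [half_le second_le]].
  have := internal j; rewrite !inE eqxx orbT => /(_ isT) ?.
  apply/andP; split; first lra.
  have [-> | j_neq2] := eqVneq j i2.
    by have := P_lt_first second_neq_first; lra.
  have := external i2; rewrite !inE negb_or second_neq_first eq_sym j_neq2.
  by move=> /(_ isT); lra.
split=> i; rewrite !inE.
  by case/orP => /eqP ->; have := P_lt_first j_neq; have := P_gt0 j; lra.
by rewrite negb_or => /andP [/P_le_second]; lra.
Qed.

Lemma stable_cases (S : {set 'I_N}) : S != set0 -> stable P S <->
  S = [set i1] /\ 2 * P i2 <= P i1 \/
  exists j, [/\ j != i1, S = [set i1; j] & pair_threshold <= P j].
Proof.
move=> S_neq0; split=> [stS | [[-> le_21] | [j [j_neq -> above]]]].
- case: (stable_shape S_neq0 stS) => [eqS | [j j_neq eqS]]; rewrite eqS in stS.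
    by left; split=> //; apply/stable_set1.
  by right; exists j; split=> //; apply/stable_pair.
- exact/stable_set1.
- exact/stable_pair.
Qed.

Lemma stable_iff_set1 (S : {set 'I_N}) : 2 * P i2 < P i1 -> S != set0 ->
  stable P S <-> S = [set i1].
Proof.
move=> lt_21 S_neq0; rewrite stable_cases //.
split=> [[[] // | [j [j_neq _]]] | ->].
  rewrite /pair_threshold ge_max => /andP [half_le _].
  by exfalso; have := P_le_second j_neq; lra.
by left; split=> //; apply: ltW.
Qed.

Lemma stable_iff_set1_or_set2 (S : {set 'I_N}) : 2 * P i2 = P i1 -> S != set0 ->
  stable P S <-> S = [set i1] \/ S = [set i1; i2].
Proof.
move=> eq_21 S_neq0; rewrite stable_cases //.
split=> [[[-> _] | [j [j_neq -> ]]] | [-> | ->]]; [by left | | | right].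
- rewrite /pair_threshold ge_max => /andP [half_le _]; right.
  have [-> // | j_neq2] := eqVneq j i2.
  by exfalso; have := P_lt_second j_neq j_neq2; lra.
- by left; split=> //; rewrite eq_21.
- exists i2; split=> //; first exact: second_neq_first.
  by rewrite /pair_threshold ge_max; apply/andP; split; have := P_gt0 i2; lra.
Qed.

Lemma exists_last_above_threshold : P i1 <= 2 * P i2 ->
  exists2 l : 'I_N, pair_threshold <= P l &
    forall k : 'I_N, pair_threshold <= P k -> (k <= l)%N.
Proof.
move=> le_12; have above2 : pair_threshold <= P i2.
  rewrite /pair_threshold ge_max; apply/andP; split; first lra.
  by have := P_lt_first second_neq_first; lra.
by case: (@arg_maxnP _ i2 (fun k => pair_threshold <= P k) val above2) => l; exists l.
Qed.

Lemma stable_iff_set2 (S : {set 'I_N}) (l : 'I_N) : P i1 < 2 * P i2 ->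
  pair_threshold <= P l -> (forall k : 'I_N, pair_threshold <= P k -> (k <= l)%N) ->
  S != set0 -> stable P S <-> exists j : 'I_N, (1 <= j <= l)%N /\ S = [set i1; j].
Proof.
move=> lt_12 l_above l_max S_neq0; rewrite stable_cases //.
split=> [[[_] | [j [j_neq -> /l_max j_le]]] | [j [/andP [j_ge1 j_le] ->]]].
- by move=> le_21; exfalso; lra.
- by exists j; rewrite -neq_first j_neq.
- right; exists j; split=> //; first by rewrite neq_first.
  exact: le_trans l_above (P_leq j_le).
Qed.

End Ranking.

Theorem proposition4 (R : realFieldType) (N : nat) (P : 'I_N -> R)
    (beta gamma : R) (i1 i2 : 'I_N) :
  (3 <= N)%N -> 0 < beta -> 0 < gamma ->
  (forall i, 0 < P i) ->
  (forall i j : 'I_N, (i < j)%N -> P j < P i) ->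
  val i1 = 0%N -> val i2 = 1%N ->
  (forall S : {set 'I_N}, S != set0 -> is_NE P beta gamma S ->
     (#|S| <= 2)%N /\ i1 \in S) /\
  (2 * P i2 < P i1 -> forall S : {set 'I_N}, S != set0 ->
     (is_NE P beta gamma S <-> S = [set i1])) /\
  (2 * P i2 = P i1 -> forall S : {set 'I_N}, S != set0 ->
     (is_NE P beta gamma S <-> S = [set i1] \/ S = [set i1; i2])) /\
  (P i1 < 2 * P i2 ->
     exists l : 'I_N,
       Num.max (P i1 / 2) (2 * P i2 - P i1) <= P l /\
       (forall k : 'I_N, Num.max (P i1 / 2) (2 * P i2 - P i1) <= P k ->
          (k <= l)%N) /\
       (forall S : {set 'I_N}, S != set0 ->
          (is_NE P beta gamma S <->
             exists j : 'I_N, (1 <= j <= l)%N /\ S = [set i1; j]))).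
Proof.
move=> _ beta_gt0 gamma_gt0 P_gt0 P_decr i1_0 i2_1.
have NE_stable := is_NE_stable gamma_gt0 P_gt0 (lt0r_neq0 beta_gt0).
split; [|split; [|split]].
- move=> S S_neq0 /(NE_stable _ S_neq0) stS.
  by split; [exact: stable_card_le2 stS | exact: stable_first_in S_neq0 stS].
- move=> lt_21 S S_neq0; rewrite NE_stable //.
  exact (stable_iff_set1 P_gt0 P_decr i1_0 i2_1 lt_21 S_neq0).
- move=> eq_21 S S_neq0; rewrite NE_stable //.
  exact (stable_iff_set1_or_set2 P_gt0 P_decr i1_0 i2_1 eq_21 S_neq0).
move=> lt_12; have [l l_above l_max] := exists_last_above_threshold P_decr i1_0 i2_1 (ltW lt_12).
exists l; split=> //; split=> // S S_neq0; rewrite NE_stable //.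
exact (stable_iff_set2 P_gt0 P_decr i1_0 i2_1 lt_12 l_above l_max S_neq0).
Qed.
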